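(* There is an absolute constant $c>0$ such that for every finite set $\Omega$ with $|\Omega|\ge2$ and every $0<\varepsilon<1/2$ there exist $n_0>0$ and a random variable $\Theta$ (whose distribution depends only on $\varepsilon,\Omega$) taking integer values with $0<\Theta<((2\ln|\Omega|)/\varepsilon)^c$ such that for all $n>n_0$ and all $\mu\in\mathcal P(\Omega^n)$ the following hold, where $I\subset[n]$ is a uniformly random subset of size $\Theta$ and, given $I$, $\sigma\in\Omega^I$ is drawn from $\mu_I$: (i) $\mathbb E[D_\square(\mu^{I,\sigma},\bar\mu^{I,\sigma})]<\varepsilon$; (ii) letting $\bar\mu^{I}=\mathbb E[\bar\mu^{I,\sigma}\mid I]=\sum_{\sigma\in\Omega^I}\mu_I(\sigma)\bar\mu^{I,\sigma}\in\mathcal P(\Omega^n)$, we have $\mathbb E[D_\square(\mu,\bar\mu^{I})]<\varepsilon$.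
   Context: $\mathcal P(\mathcal X)$ denotes the set of probability measures on a finite set $\mathcal X$; $[n]=\{1,\dots,n\}$. For $\mu\in\mathcal P(\Omega^n)$ and $I\subset[n]$, $\mu_I$ is the joint marginal distribution of the coordinates in $I$, and $\mu_i=\mu_{\{i\}}$. For $\sigma\in\Omega^I$ let $S^{I,\sigma}=\{\tau\in\Omega^n:\tau_i=\sigma_i\ \forall i\in I\}$ and let $\mu^{I,\sigma}=\mu[\cdot\,|S^{I,\sigma}]$ be the conditional distribution if $\mu(S^{I,\sigma})>0$, and the uniform distribution on $S^{I,\sigma}$ otherwise. Let $\bar\mu^{I,\sigma}=\bigotimes_{i=1}^n\mu^{I,\sigma}_i$ be the product measure with the same one-coordinate marginals as $\mu^{I,\sigma}$. For $\mu,\nu\in\mathcal P(\Omega^n)$ let $\Gamma(\mu,\nu)$ be the set of couplings, i.e. probability measures $\gamma$ on $\Omega^n\times\Omega^n$ whose first and second marginals are $\mu$ and $\nu$. The cut metric is $D_\square(\mu,\nu)=\frac1n\min_{\gamma\in\Gamma(\mu,\nu)}\max_{I\subset[n],\,B\subset\Omega^n\times\Omega^n,\,\omega\in\Omega}\Big|\sum_{i\in I}\sum_{(\sigma,\tau)\in B}\gamma(\sigma,\tau)\big(\mathbf 1\{\sigma_i=\omega\}-\mathbf 1\{\tau_i=\omega\}\big)\Big|$. *)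

From HB Require Import structures.
From Stdlib Require Import Reals ClassicalEpsilon.
From mathcomp Require Import all_boot.

Set Implicit Arguments.
Unset Strict Implicit.
Unset Printing Implicit Defensive.

Local Open Scope R_scope.

Lemma Rplus_assoc' : associative Rplus.
Proof. by move=> x y z; rewrite Rplus_assoc. Qed.
Lemma Rmult_assoc' : associative Rmult.
Proof. by move=> x y z; rewrite Rmult_assoc. Qed.
HB.instance Definition _ :=
  Monoid.isComLaw.Build R 0 Rplus Rplus_assoc' Rplus_comm Rplus_0_l.
HB.instance Definition _ :=
  Monoid.isComLaw.Build R 1 Rmult Rmult_assoc' Rmult_comm Rmult_1_l.

Definition config (Om : finType) (n : nat) := {ffun 'I_n -> Om}.

Definition ind (b : bool) : R := if b then 1 else 0.

Definition is_prob (T : finType) (p : T -> R) : Prop :=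
  (forall x, 0 <= p x) /\ \big[Rplus/0]_(x : T) p x = 1.

Section Defs.
Variables (Om : finType) (n : nat).
Local Notation cfg := (config Om n).

Definition cyl (I : {set 'I_n}) (s : {ffun {i : 'I_n | i \in I} -> Om})
  : pred cfg := fun tau => [forall i : {i : 'I_n | i \in I}, tau (val i) == s i].

Definition margI (mu : cfg -> R) (I : {set 'I_n})
  (s : {ffun {i : 'I_n | i \in I} -> Om}) : R :=
  \big[Rplus/0]_(tau : cfg | cyl s tau) mu tau.

(* mu^{I,sigma}: conditional measure, uniform on S^{I,sigma} if it is null *)
Definition condm (mu : cfg -> R) (I : {set 'I_n})
  (s : {ffun {i : 'I_n | i \in I} -> Om}) : cfg -> R :=
  fun tau =>
    if Rlt_dec 0 (margI mu s) then ind (cyl s tau) * mu tau / margI mu s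
    else ind (cyl s tau) / (\big[Rplus/0]_(t : cfg | cyl s t) 1).

Definition marg1 (mu : cfg -> R) (i : 'I_n) (w : Om) : R :=
  \big[Rplus/0]_(tau : cfg | tau i == w) mu tau.

Definition prodm (mu : cfg -> R) : cfg -> R :=
  fun tau => \big[Rmult/1]_(i : 'I_n) marg1 mu i (tau i).

Definition coupling (mu nu : cfg -> R) (g : cfg * cfg -> R) : Prop :=
  (forall p, 0 <= g p) /\
  (forall s, \big[Rplus/0]_(t : cfg) g (s, t) = mu s) /\
  (forall t, \big[Rplus/0]_(s : cfg) g (s, t) = nu t).

(* the inner maximum in the definition of the cut metric
   (all terms are >= 0, so folding Rmax from 0 gives the maximum) *)
Definition cut_val (g : cfg * cfg -> R) : R :=
  \big[Rmax/0]_(I : {set 'I_n}) \big[Rmax/0]_(B : {set (cfg * cfg)%type})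
   \big[Rmax/0]_(w : Om)
     Rabs (\big[Rplus/0]_(i in I) \big[Rplus/0]_(p : (cfg * cfg)%type | p \in B)
             (g p * (ind (fst p i == w) - ind (snd p i == w)))).

Definition is_inf (E : R -> Prop) (d : R) : Prop :=
  (forall x, E x -> d <= x) /\ (forall e, (forall x, E x -> e <= x) -> e <= d).

(* D_cut(mu,nu) = (1/n) * min over couplings (taken as the infimum) *)
Definition Dcut (mu nu : cfg -> R) : R :=
  epsilon (inhabits 0)
    (is_inf (fun x => exists g, coupling mu nu g /\ x = cut_val g)) / INR n.

Definition barI (mu : cfg -> R) (I : {set 'I_n}) : cfg -> R :=
  fun tau => \big[Rplus/0]_(s : {ffun {i : 'I_n | i \in I} -> Om})
               (margI mu s * prodm (condm mu s) tau).

(* E over Theta (law theta, supported in [0,N)) and I uniform of size Theta *)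
Definition avgI (N : nat) (theta : nat -> R) (F : {set 'I_n} -> R) : R :=
  \big[Rplus/0]_(t < N) (theta t *
    \big[Rplus/0]_(I : {set 'I_n} | #|I| == t) (/ INR 'C(n, t) * F I)).

Definition expect_i (N : nat) (theta : nat -> R) (mu : cfg -> R) : R :=
  avgI N theta (fun I =>
    \big[Rplus/0]_(s : {ffun {i : 'I_n | i \in I} -> Om})
      (margI mu s * Dcut (condm mu s) (prodm (condm mu s)))).

Definition expect_ii (N : nat) (theta : nat -> R) (mu : cfg -> R) : R :=
  avgI N theta (fun I => Dcut mu (barI mu I)).

End Defs.

(* The proof couples a measure on Omega^n with the product of its one-site
   marginals independently.  For a set A of coordinates and a colour w, the
   number of w's in A then differs between the two sides, in expectation, by
   at most the two standard deviations; under the product measure the variance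
   is at most n, and under nu it is a sum of pair covariances, at most n times
   the square root of the covariance energy sum_{i,j,w} Cov(i,j,w)^2.  Hence
   D(nu, product) <= (energy^(1/2) / n)^(1/2) + n^(-1/2).

   Conditioning on sigma_I kills the covariances on average: the potential
   Phi(I) = E sum_{i,w} P[sigma_i = w | sigma_I]^2 lies in [0, n] and adding a
   coordinate j to I increases it by at least the expected conditional
   sum_{i,w} Cov(i,j,w)^2.  Averaging over uniformly random I of size t and
   telescoping in t, a size Theta uniform on {1..T} gives expected conditional
   energy at most n^2/T, so both (i) and (ii) are at most T^(-1/4) + n^(-1/2)
   (for (ii) one mixes the couplings of the conditional measures).  Taking
   T ~ 16 eps^-4 and n > 4 eps^-2 gives the theorem with c = 9. *)

From HB Require Import structures.
From Stdlib Require Import Reals ClassicalEpsilon Lra FunctionalExtensionality.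
From Stdlib Require ZArith.
From mathcomp Require Import all_boot.

Set Implicit Arguments.
Unset Strict Implicit.
Unset Printing Implicit Defensive.

Local Open Scope R_scope.

Lemma Rmult_0_l' : left_zero 0 Rmult. Proof. exact: Rmult_0_l. Qed.
Lemma Rmult_0_r' : right_zero 0 Rmult. Proof. exact: Rmult_0_r. Qed.
HB.instance Definition _ := Monoid.isMulLaw.Build R 0 Rmult Rmult_0_l' Rmult_0_r'.
Lemma Rmult_plus_distr_r' : left_distributive Rmult Rplus.
Proof. by move=> x y z; ring. Qed.
Lemma Rmult_plus_distr_l' : right_distributive Rmult Rplus.
Proof. by move=> x y z; ring. Qed.
HB.instance Definition _ :=
  Monoid.isAddLaw.Build R Rmult Rplus Rmult_plus_distr_r' Rmult_plus_distr_l'.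

Lemma Rinv_ge0 x : 0 <= x -> 0 <= / x.
Proof.
move=> x0; case: (Req_dec x 0) => [->|h]; first by rewrite Rinv_0; lra.
by apply: Rlt_le; apply: Rinv_0_lt_compat; lra.
Qed.

Section RealSums.
Variables (I : Type) (r : seq I) (P : pred I).

Lemma sumR_le (F G : I -> R) : (forall i, P i -> F i <= G i) ->
  \big[Rplus/0]_(i <- r | P i) F i <= \big[Rplus/0]_(i <- r | P i) G i.
Proof.
move=> H; apply: (big_ind2 (fun x y => x <= y)) => //; first lra.
by move=> *; lra.
Qed.

Lemma sumR_ge0 (F : I -> R) : (forall i, P i -> 0 <= F i) ->
  0 <= \big[Rplus/0]_(i <- r | P i) F i.
Proof.
move=> H; apply: (big_ind (fun x => 0 <= x)) => //; first lra.
by move=> *; lra.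
Qed.

Lemma mulR_sumr (F : I -> R) c :
  c * \big[Rplus/0]_(i <- r | P i) F i = \big[Rplus/0]_(i <- r | P i) (c * F i).
Proof.
apply: (big_endo (Rmult c)); last by rewrite Rmult_0_r.
by move=> x y; rewrite Rmult_plus_distr_l.
Qed.

Lemma mulR_suml (F : I -> R) c :
  \big[Rplus/0]_(i <- r | P i) F i * c = \big[Rplus/0]_(i <- r | P i) (F i * c).
Proof. by rewrite Rmult_comm mulR_sumr; apply: eq_bigr => i _; apply: Rmult_comm. Qed.

Lemma sumR_opp (F : I -> R) :
  - (\big[Rplus/0]_(i <- r | P i) F i) = \big[Rplus/0]_(i <- r | P i) (- F i).
Proof.
apply: (big_endo Ropp); last by rewrite Ropp_0.
by move=> x y; rewrite Ropp_plus_distr.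
Qed.

Lemma sumR_sub (F G : I -> R) :
  \big[Rplus/0]_(i <- r | P i) (F i - G i) =
  \big[Rplus/0]_(i <- r | P i) F i - \big[Rplus/0]_(i <- r | P i) G i.
Proof. by rewrite /Rminus big_split /= sumR_opp. Qed.

Lemma abs_sumR_le (F : I -> R) :
  Rabs (\big[Rplus/0]_(i <- r | P i) F i) <= \big[Rplus/0]_(i <- r | P i) Rabs (F i).
Proof.
apply: (big_ind2 (fun x y => Rabs x <= y)).
- by rewrite Rabs_R0; lra.
- by move=> a1 a2 b1 b2 h1 h2; apply: Rle_trans (Rabs_triang _ _) _; lra.
- by move=> i _; lra.
Qed.

Lemma quadratic_discriminant_le (A B C : R) : 0 <= B ->
  (forall l, 0 <= A - 2 * l * C + l ^ 2 * B) -> C ^ 2 <= A * B.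
Proof.
move=> B0 H.
case: (Rle_lt_or_eq_dec _ _ B0) => [Bp|Bz].
- have := H (C / B).
  have -> : A - 2 * (C / B) * C + (C / B) ^ 2 * B = (A * B - C ^ 2) / B
    by field; lra.
  move=> h; have : 0 <= (A * B - C ^ 2) / B * B by apply: Rmult_le_pos; lra.
  have -> : (A * B - C ^ 2) / B * B = A * B - C ^ 2 by field; lra.
  lra.
- subst B; case: (Req_dec C 0) => [->|Cn]; first by have := H 0; nra.
  have := H ((A + 1) / (2 * C)).
  have -> : A - 2 * ((A + 1) / (2 * C)) * C + ((A + 1) / (2 * C)) ^ 2 * 0 = -1
    by field.
  lra.
Qed.

Lemma sumR_cauchy_schwarz (w f g : I -> R) : (forall i, P i -> 0 <= w i) ->
  (\big[Rplus/0]_(i <- r | P i) (w i * f i * g i)) ^ 2 <=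
  \big[Rplus/0]_(i <- r | P i) (w i * f i ^ 2) *
  \big[Rplus/0]_(i <- r | P i) (w i * g i ^ 2).
Proof.
move=> w0; apply: quadratic_discriminant_le.
  by apply: sumR_ge0 => i Pi; apply: Rmult_le_pos; [apply: w0|apply: pow2_ge_0].
move=> l.
have : 0 <= \big[Rplus/0]_(i <- r | P i) (w i * (f i - l * g i) ^ 2).
  by apply: sumR_ge0 => i Pi; apply: Rmult_le_pos; [apply: w0|apply: pow2_ge_0].
have -> : \big[Rplus/0]_(i <- r | P i) (w i * (f i - l * g i) ^ 2) =
   \big[Rplus/0]_(i <- r | P i) (w i * f i ^ 2 + ((- 2 * l) * (w i * f i * g i)
       + l ^ 2 * (w i * g i ^ 2))).
  by apply: eq_bigr => i _; ring.
rewrite !big_split /= -!mulR_sumr; lra.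
Qed.

Lemma jensen_sqrt (w x : I -> R) :
  (forall i, P i -> 0 <= w i) -> (forall i, P i -> 0 <= x i) ->
  \big[Rplus/0]_(i <- r | P i) w i <= 1 ->
  \big[Rplus/0]_(i <- r | P i) (w i * sqrt (x i)) <=
  sqrt (\big[Rplus/0]_(i <- r | P i) (w i * x i)).
Proof.
move=> w0 x0 w1.
set S := \big[Rplus/0]_(i <- r | P i) (w i * sqrt (x i)).
have S0 : 0 <= S.
  by apply: sumR_ge0 => i Pi; apply: Rmult_le_pos; [apply: w0|apply: sqrt_pos].
have W0 : 0 <= \big[Rplus/0]_(i <- r | P i) w i by apply: sumR_ge0.
have := sumR_cauchy_schwarz (fun _ => 1) (fun i => sqrt (x i)) w0.
have -> : \big[Rplus/0]_(i <- r | P i) (w i * 1 * sqrt (x i)) = S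
  by apply: eq_bigr => i _; ring.
have -> : \big[Rplus/0]_(i <- r | P i) (w i * 1 ^ 2) = \big[Rplus/0]_(i <- r | P i) w i
  by apply: eq_bigr => i _; ring.
have -> : \big[Rplus/0]_(i <- r | P i) (w i * sqrt (x i) ^ 2) =
          \big[Rplus/0]_(i <- r | P i) (w i * x i).
  by apply: eq_bigr => i Pi; rewrite /= Rmult_1_r sqrt_sqrt //; apply: x0.
have X0 : 0 <= \big[Rplus/0]_(i <- r | P i) (w i * x i).
  by apply: sumR_ge0 => i Pi; apply: Rmult_le_pos; [apply: w0|apply: x0].
move=> CS; rewrite -(sqrt_pow2 S S0); apply: sqrt_le_1_alt.
by apply: Rle_trans CS _; nra.
Qed.

End RealSums.

Section FinRealSums.
Variable T : finType.

Lemma sumR_const (A : {pred T}) c : \big[Rplus/0]_(i in A) c = INR #|A| * c.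
Proof.
rewrite big_const; elim: #|A| => [|k IH] /=; first by rewrite Rmult_0_l.
by rewrite IH; case: k {IH} => [|k] /=; ring.
Qed.

Lemma sumR_le_subpred (P Q : pred T) (F : T -> R) :
  (forall i, P i -> Q i) -> (forall i, Q i -> 0 <= F i) ->
  \big[Rplus/0]_(i | P i) F i <= \big[Rplus/0]_(i | Q i) F i.
Proof.
move=> PQ F0; rewrite [X in X <= _]big_mkcond [X in _ <= X]big_mkcond.
apply: sumR_le => i _; case: ifP => Pi; first by rewrite (PQ _ Pi); lra.
by case: ifP => Qi; [apply: F0|lra].
Qed.

Lemma sumR_ge_term (F : T -> R) a :
  (forall x, 0 <= F x) -> F a <= \big[Rplus/0]_x F x.
Proof.
move=> F0; rewrite (bigD1 a) //=.
have : 0 <= \big[Rplus/0]_(x | x != a) F x by apply: sumR_ge0.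
lra.
Qed.

Lemma sqr_sumR_le (a : T -> R) :
  (\big[Rplus/0]_j a j) ^ 2 <= INR #|T| * \big[Rplus/0]_j a j ^ 2.
Proof.
have := @sumR_cauchy_schwarz _ (index_enum T) predT (fun _ => 1) (fun _ => 1) a
  (fun _ _ => Rle_0_1).
have -> : \big[Rplus/0]_(j <- index_enum T | predT j) (1 * 1 * a j) =
          \big[Rplus/0]_j a j by apply: eq_bigr => j _; ring.
have -> : \big[Rplus/0]_(j <- index_enum T | predT j) (1 * 1 ^ 2) = INR #|T|
  by rewrite -[RHS]Rmult_1_r -sumR_const; apply: eq_bigr => j _; ring.
have -> : \big[Rplus/0]_(j <- index_enum T | predT j) (1 * a j ^ 2) =
          \big[Rplus/0]_j a j ^ 2 by apply: eq_bigr => j _; ring.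
done.
Qed.

Lemma bigmaxR_le (F : T -> R) M :
  0 <= M -> (forall x, F x <= M) -> \big[Rmax/0]_x F x <= M.
Proof.
move=> M0 H; apply: (big_ind (fun x => x <= M)) => //.
by move=> x y hx hy; apply: Rmax_lub.
Qed.

Lemma bigmaxR_ge0 (F : T -> R) : 0 <= \big[Rmax/0]_x F x.
Proof.
apply: (big_rec (fun x => 0 <= x)); first lra.
by move=> i x _ hx; apply: Rle_trans hx (Rmax_r _ _).
Qed.

Lemma sum_ind_eq (a : T) : \big[Rplus/0]_(w : T) ind (a == w) = 1.
Proof.
rewrite (bigD1 a) //= big1 /ind ?eqxx; first ring.
by move=> w /negbTE; rewrite eq_sym => ->.
Qed.

Lemma sum_mul_ind_eq (a : T) (f : T -> R) :
  \big[Rplus/0]_(w : T) (f w * ind (w == a)) = f a.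
Proof.
rewrite (bigD1 a) //= big1 /ind ?eqxx; first ring.
by move=> w /negbTE ->; ring.
Qed.

End FinRealSums.

Lemma ind_ge0 b : 0 <= ind b. Proof. by rewrite /ind; case: b; lra. Qed.
Lemma ind_le1 b : ind b <= 1. Proof. by rewrite /ind; case: b; lra. Qed.
Lemma ind_sqr b : ind b * ind b = ind b. Proof. by rewrite /ind; case: b; ring. Qed.

Section Moments.
Variables (Om : finType) (n : nat).
Local Notation cfg := (config Om n).

Definition expect (nu : cfg -> R) (f : cfg -> R) : R :=
  \big[Rplus/0]_(s : cfg) (nu s * f s).
Definition indic (i : 'I_n) (w : Om) (s : cfg) : R := ind (s i == w).
Definition mean (nu : cfg -> R) i w := expect nu (indic i w).
Definition cov (nu : cfg -> R) i j w :=
  expect nu (fun s => indic i w s * indic j w s) - mean nu i w * mean nu j w.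
Definition count (A : {set 'I_n}) (w : Om) (s : cfg) : R :=
  \big[Rplus/0]_(i in A) indic i w s.

Lemma eq_expect nu f g : (forall s, f s = g s) -> expect nu f = expect nu g.
Proof. by move=> E; apply: eq_bigr => s _; rewrite E. Qed.
Arguments eq_expect {nu f} g.

Lemma expectD nu f g : expect nu (fun s => f s + g s) = expect nu f + expect nu g.
Proof. by rewrite /expect -big_split; apply: eq_bigr => s _ /=; ring. Qed.

Lemma expectZ nu c f : expect nu (fun s => c * f s) = c * expect nu f.
Proof. by rewrite /expect mulR_sumr; apply: eq_bigr => s _ /=; ring. Qed.

Lemma expect_cst nu c : is_prob nu -> expect nu (fun _ => c) = c.
Proof. by case=> _ h1; rewrite /expect -mulR_suml h1 Rmult_1_l. Qed.

Lemma expect_ge0 nu f : is_prob nu -> (forall s, 0 <= f s) -> 0 <= expect nu f.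
Proof. by case=> h0 _ f0; apply: sumR_ge0 => s _; apply: Rmult_le_pos. Qed.

Lemma expect_le nu f g : is_prob nu -> (forall s, f s <= g s) ->
  expect nu f <= expect nu g.
Proof. by case=> h0 _ fg; apply: sumR_le => s _; apply: Rmult_le_compat_l. Qed.

Lemma expect_sum (J : finType) nu (A : {pred J}) (F : J -> cfg -> R) :
  expect nu (fun s => \big[Rplus/0]_(i in A) F i s) =
  \big[Rplus/0]_(i in A) expect nu (F i).
Proof.
rewrite /expect (eq_bigr (fun s => \big[Rplus/0]_(i in A) (nu s * F i s))).
  by rewrite exchange_big.
by move=> s _; rewrite mulR_sumr.
Qed.

Lemma sum_mean nu i : is_prob nu -> \big[Rplus/0]_(w : Om) mean nu i w = 1.
Proof.
move=> P; rewrite /mean -expect_sum (eq_expect (fun _ => 1)) ?expect_cst //.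
by move=> s; rewrite /indic sum_ind_eq.
Qed.

Lemma mean_bounds nu i w : is_prob nu -> 0 <= mean nu i w <= 1.
Proof.
move=> P; split; first by apply: expect_ge0 => // s; apply: ind_ge0.
by rewrite -(expect_cst 1 P); apply: expect_le => // s; apply: ind_le1.
Qed.

Lemma var_count nu A w : is_prob nu ->
  expect nu (fun s => (count A w s - \big[Rplus/0]_(i in A) mean nu i w) ^ 2) =
  \big[Rplus/0]_(i in A) \big[Rplus/0]_(j in A) cov nu i j w.
Proof.
move=> P.
rewrite (eq_expect (fun s => \big[Rplus/0]_(i in A) \big[Rplus/0]_(j in A)
   ((indic i w s - mean nu i w) * (indic j w s - mean nu j w)))); last first.
  move=> s; rewrite /count -sumR_sub /= Rmult_1_r mulR_suml.
  by apply: eq_bigr => i _; rewrite mulR_sumr.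
rewrite expect_sum; apply: eq_bigr => i _; rewrite expect_sum; apply: eq_bigr => j _.
rewrite (eq_expect (fun s => indic i w s * indic j w s + ((- mean nu j w) * indic i w s +
   ((- mean nu i w) * indic j w s + (mean nu i w * mean nu j w))))); last by move=> s; ring.
by rewrite !expectD !expectZ expect_cst // /cov /mean; ring.
Qed.

Lemma expect_abs_le_sqrt nu f : is_prob nu ->
  expect nu (fun s => Rabs (f s)) <= sqrt (expect nu (fun s => f s ^ 2)).
Proof.
case=> h0 h1; rewrite /expect.
rewrite (eq_bigr (fun s => nu s * sqrt (f s ^ 2))); last first.
  by move=> s _; rewrite /= Rmult_1_r sqrt_Rsqr_abs.
apply: jensen_sqrt => //; first by move=> s _; apply: pow2_ge_0.
by rewrite h1; lra.
Qed.

Lemma independent_abs_diff_le nu pi f : is_prob nu -> is_prob pi ->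
  expect nu f = expect pi f ->
  \big[Rplus/0]_(s : cfg) \big[Rplus/0]_(t : cfg) (nu s * pi t * Rabs (f s - f t))
  <= expect nu (fun s => Rabs (f s - expect nu f)) +
     expect pi (fun s => Rabs (f s - expect nu f)).
Proof.
move=> Pn Pp E; set m := expect nu f.
apply: Rle_trans (_ : \big[Rplus/0]_(s : cfg) \big[Rplus/0]_(t : cfg)
   (nu s * pi t * (Rabs (f s - m) + Rabs (f t - m))) <= _).
  apply: sumR_le => s _; apply: sumR_le => t _; apply: Rmult_le_compat_l.
    by apply: Rmult_le_pos; [case: Pn|case: Pp].
  have -> : f s - f t = (f s - m) + - (f t - m) by ring.
  by apply: Rle_trans (Rabs_triang _ _) _; rewrite Rabs_Ropp; lra.
apply: Req_le.
rewrite (eq_bigr (fun s => nu s * Rabs (f s - m) * \big[Rplus/0]_(t : cfg) pi t +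
   nu s * \big[Rplus/0]_(t : cfg) (pi t * Rabs (f t - m)))); last first.
  by move=> s _; rewrite !mulR_sumr -big_split; apply: eq_bigr => t _ /=; ring.
rewrite big_split /=; case: Pp => _ ->.
case: Pn => _ h1; rewrite /expect -[X in _ + X = _]mulR_suml h1 Rmult_1_l.
by congr (_ + _); apply: eq_bigr => s _; ring.
Qed.

End Moments.
Arguments eq_expect {Om n nu f} g.

Section ProductMeasure.
Variables (Om : finType) (n : nat).
Local Notation cfg := (config Om n).

Lemma sum_prod_indic (f : 'I_n -> Om -> R) (K : {set 'I_n}) w :
  (forall i, \big[Rplus/0]_(v : Om) f i v = 1) ->
  \big[Rplus/0]_(t : cfg) ((\big[Rmult/1]_i f i (t i)) *
      \big[Rmult/1]_(i in K) ind (t i == w)) = \big[Rmult/1]_(i in K) f i w.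
Proof.
move=> f1.
pose c i v := if i \in K then ind (v == w) else 1.
rewrite [RHS](_ : _ = \big[Rmult/1]_i \big[Rplus/0]_v (f i v * c i v)); last first.
  rewrite big_mkcond; apply: eq_bigr => i _; rewrite /c; case: (i \in K).
    by rewrite sum_mul_ind_eq.
  by rewrite -[LHS](f1 i); apply: eq_bigr => v _; ring.
rewrite (bigA_distr_bigA (fun i v => f i v * c i v)).
apply: eq_bigr => t _; rewrite big_split /=; congr (_ * _).
by rewrite [RHS]big_mkcond /c [LHS]big_mkcond.
Qed.

Lemma marg1E (nu : cfg -> R) i w : marg1 nu i w = mean nu i w.
Proof.
rewrite /marg1 /mean /expect /indic big_mkcond; apply: eq_bigr => t _.
by rewrite /ind; case: (t i == w); ring.
Qed.

Lemma sum_marg1 (nu : cfg -> R) i : is_prob nu ->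
  \big[Rplus/0]_(v : Om) marg1 nu i v = 1.
Proof.
by move=> P; rewrite (eq_bigr (mean nu i)) ?sum_mean // => v _; rewrite marg1E.
Qed.

Lemma prodm_ge0 (nu : cfg -> R) t : (forall s, 0 <= nu s) -> 0 <= prodm nu t.
Proof.
move=> h; apply: (big_ind (fun x => 0 <= x)); first lra.
  by move=> *; apply: Rmult_le_pos.
by move=> i _; apply: sumR_ge0.
Qed.

Lemma prodm_prob (nu : cfg -> R) : is_prob nu -> is_prob (prodm nu).
Proof.
move=> P; split; first by move=> t; apply: prodm_ge0; case: P.
rewrite /prodm -(bigA_distr_bigA (fun i v => marg1 nu i v)).
by rewrite big1 // => i _; apply: sum_marg1.
Qed.

Lemma mean_prodm (nu : cfg -> R) i w : is_prob nu -> mean (prodm nu) i w = mean nu i w.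
Proof.
move=> P; rewrite -[RHS]marg1E /mean /expect.
have := sum_prod_indic [set i] w (sum_marg1 (nu:=nu)^~ P); rewrite big_set1 => <-.
by apply: eq_bigr => t _; rewrite big_set1.
Qed.

Lemma mean2_prodm (nu : cfg -> R) i j w : is_prob nu -> i != j ->
  expect (prodm nu) (fun s => indic i w s * indic j w s) = mean nu i w * mean nu j w.
Proof.
move=> P ij; rewrite -!marg1E /expect.
have nij : i \notin [set j] by rewrite in_set1.
have := sum_prod_indic [set i; j] w (sum_marg1 (nu:=nu)^~ P).
rewrite big_setU1 //= big_set1 => <-.
by apply: eq_bigr => t _; rewrite big_setU1 //= big_set1.
Qed.

Lemma var_count_prodm (nu : cfg -> R) (A : {set 'I_n}) w : is_prob nu ->
  \big[Rplus/0]_(i in A) \big[Rplus/0]_(j in A) cov (prodm nu) i j w <= INR n.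
Proof.
move=> P.
apply: Rle_trans (_ : \big[Rplus/0]_(i in A) 1 <= _); last first.
  rewrite sumR_const Rmult_1_r; apply: le_INR; apply/leP.
  by rewrite -[X in (_ <= X)%N]card_ord; apply: max_card.
apply: sumR_le => i iA; rewrite (bigD1 i) //= big1; last first.
  move=> j /andP [_ ji]; rewrite /cov mean2_prodm // ?mean_prodm //; first ring.
  by rewrite eq_sym.
rewrite /cov (eq_expect (indic i w)); last by move=> s; rewrite /indic ind_sqr.
have := mean_bounds i w (prodm_prob P); rewrite /mean => h; nra.
Qed.

End ProductMeasure.

Lemma inf_nonneg_exists (E : R -> Prop) x0 : E x0 -> (forall x, E x -> 0 <= x) ->
  exists d, is_inf E d.
Proof.
move=> Ex0 E0.
have hb : bound (fun y => E (- y)) by exists 0 => y Ey; have := E0 _ Ey; lra.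
have hn : exists y, E (- y) by exists (- x0); rewrite Ropp_involutive.
have [m [ub lub]] := completeness (fun y => E (- y)) hb hn.
exists (- m); split.
- move=> x Ex; have : - x <= m by apply: ub; rewrite Ropp_involutive.
  lra.
- move=> e He; have : m <= - e by apply: lub => y Ey; have := He _ Ey; lra.
  lra.
Qed.

Section CutMetric.
Variables (Om : finType) (n : nat).
Local Notation cfg := (config Om n).

Lemma cut_val_le (g : cfg * cfg -> R) M : 0 <= M -> (forall p, 0 <= g p) ->
  (forall A w, \big[Rplus/0]_(p : cfg * cfg)
     (g p * Rabs (count A w p.1 - count A w p.2)) <= M) -> cut_val g <= M.
Proof.
move=> M0 g0 H; apply: bigmaxR_le => // A; apply: bigmaxR_le => // B.
apply: bigmaxR_le => // w; rewrite exchange_big /=.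
rewrite (eq_bigr (fun p => g p * (count A w p.1 - count A w p.2))); last first.
  by move=> p _; rewrite /count -sumR_sub mulR_sumr.
apply: Rle_trans (abs_sumR_le _ _ _) _; apply: Rle_trans (H A w).
rewrite (eq_bigr (fun p => g p * Rabs (count A w p.1 - count A w p.2))); last first.
  by move=> p _; rewrite Rabs_mult (Rabs_pos_eq _ (g0 p)).
apply: sumR_le_subpred => // p _.
by apply: Rmult_le_pos => //; apply: Rabs_pos.
Qed.

Lemma Dcut_le_cut_val (mu nu : cfg -> R) g : (0 < n)%N -> coupling mu nu g ->
  Dcut mu nu <= cut_val g / INR n.
Proof.
move=> n0 cg; rewrite /Dcut /Rdiv; apply: Rmult_le_compat_r.
  by apply: Rlt_le; apply: Rinv_0_lt_compat; apply: lt_0_INR; apply/ltP.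
set E := fun x => _.
have [d Hd] : exists d, is_inf E d.
  apply: (@inf_nonneg_exists E (cut_val g)); first by exists g.
  by move=> x [g' [_ ->]]; apply: bigmaxR_ge0.
have [lb _] := epsilon_spec (inhabits 0) (is_inf E) (ex_intro _ d Hd).
by apply: lb; exists g.
Qed.

Definition cov_energy (nu : cfg -> R) : R :=
  \big[Rplus/0]_(j : 'I_n) \big[Rplus/0]_(i : 'I_n) \big[Rplus/0]_(w : Om)
     cov nu i j w ^ 2.

Definition cov_defect (nu : cfg -> R) : R := sqrt (sqrt (cov_energy nu) / INR n).

Lemma cov_energy_ge0 nu : 0 <= cov_energy nu.
Proof.
by do 3 (apply: sumR_ge0 => ? _); apply: pow2_ge_0.
Qed.

Lemma sum_cov_le_energy nu (A : {set 'I_n}) w :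
  \big[Rplus/0]_(i in A) \big[Rplus/0]_(j in A) cov nu i j w <=
  INR n * sqrt (cov_energy nu).
Proof.
set V := \big[Rplus/0]_(i : 'I_n) \big[Rplus/0]_(j : 'I_n) Rabs (cov nu i j w).
set S := \big[Rplus/0]_(i : 'I_n) \big[Rplus/0]_(j : 'I_n) cov nu i j w ^ 2.
have n0 := pos_INR n.
have le_V : \big[Rplus/0]_(i in A) \big[Rplus/0]_(j in A) cov nu i j w <= V.
  apply: Rle_trans (_ : \big[Rplus/0]_(i in A) \big[Rplus/0]_(j in A)
      Rabs (cov nu i j w) <= _).
    by apply: sumR_le => i _; apply: sumR_le => j _; apply: Rle_abs.
  apply: Rle_trans (_ : \big[Rplus/0]_(i in A) \big[Rplus/0]_(j : 'I_n)
      Rabs (cov nu i j w) <= _).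
    by apply: sumR_le => i _; apply: sumR_le_subpred => // j _; apply: Rabs_pos.
  by apply: sumR_le_subpred => // i _; apply: sumR_ge0 => j _; apply: Rabs_pos.
have V0 : 0 <= V by do 2 (apply: sumR_ge0 => ? _); apply: Rabs_pos.
have S0 : 0 <= S by do 2 (apply: sumR_ge0 => ? _); apply: pow2_ge_0.
have V_S : V ^ 2 <= INR n ^ 2 * S.
  apply: Rle_trans (sqr_sumR_le _) _; rewrite card_ord /S.
  rewrite [X in _ <= X](_ : _ = INR n * \big[Rplus/0]_(i : 'I_n) (INR n *
      \big[Rplus/0]_(j : 'I_n) cov nu i j w ^ 2)); last first.
    by rewrite -mulR_sumr -Rmult_assoc /= Rmult_1_r.
  apply: Rmult_le_compat_l => //; apply: sumR_le => i _.
  apply: Rle_trans (sqr_sumR_le _) _; rewrite card_ord; apply: Rmult_le_compat_l => //.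
  by apply: Req_le; apply: eq_bigr => j _; rewrite pow2_abs.
have S_energy : S <= cov_energy nu.
  rewrite /S /cov_energy exchange_big; apply: sumR_le => j _; apply: sumR_le => i _.
  by apply: sumR_ge_term => ?; apply: pow2_ge_0.
apply: Rle_trans le_V _.
apply: Rle_trans (_ : sqrt (INR n ^ 2 * S) <= _).
  by rewrite -(sqrt_pow2 V V0); apply: sqrt_le_1_alt.
rewrite sqrt_mult_alt; last by apply: pow2_ge_0.
by rewrite sqrt_pow2 //; apply: Rmult_le_compat_l => //; apply: sqrt_le_1_alt.
Qed.

Lemma prod_coupling_count_le (nu : cfg -> R) A w : (0 < n)%N -> is_prob nu ->
  \big[Rplus/0]_(p : cfg * cfg)
    (nu p.1 * prodm nu p.2 * Rabs (count A w p.1 - count A w p.2))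
  <= INR n * cov_defect nu + sqrt (INR n).
Proof.
move=> n0 Pn; have Pp := prodm_prob Pn.
have np : 0 < INR n by apply: lt_0_INR; apply/ltP.
rewrite -(pair_bigA _ (fun s t => nu s * prodm nu t * Rabs (count A w s - count A w t))).
have mean_count : expect nu (count A w) = \big[Rplus/0]_(i in A) mean nu i w.
  by rewrite /count expect_sum.
have mean_count' : expect nu (count A w) = \big[Rplus/0]_(i in A) mean (prodm nu) i w.
  by rewrite mean_count; apply: eq_bigr => i _; rewrite mean_prodm.
have same_mean : expect nu (count A w) = expect (prodm nu) (count A w).
  by rewrite mean_count' /count expect_sum.
apply: Rle_trans (independent_abs_diff_le Pn Pp same_mean) _.
apply: Rplus_le_compat.
- apply: Rle_trans (expect_abs_le_sqrt _ Pn) _.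
  rewrite [X in expect _ (fun s => (count A w s - X) ^ 2)]mean_count var_count //.
  have -> : INR n * cov_defect nu = sqrt (INR n * sqrt (cov_energy nu)).
    rewrite /cov_defect -[X in X * sqrt _](sqrt_square (INR n)); last lra.
    rewrite -sqrt_mult_alt; last by apply: Rmult_le_pos; lra.
    by congr sqrt; field; lra.
  by apply: sqrt_le_1_alt; apply: sum_cov_le_energy.
- apply: Rle_trans (expect_abs_le_sqrt _ Pp) _.
  rewrite [X in expect _ (fun s => (count A w s - X) ^ 2)]mean_count' var_count //.
  by apply: sqrt_le_1_alt; apply: var_count_prodm.
Qed.

Lemma Dcut_prodm_le (nu : cfg -> R) : (0 < n)%N -> is_prob nu ->
  Dcut nu (prodm nu) <= cov_defect nu + sqrt (INR n) / INR n.
Proof.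
move=> n0 Pn; have Pp := prodm_prob Pn; case: (Pn) => nu0 nu1; case: (Pp) => p0 p1.
have np : 0 < INR n by apply: lt_0_INR; apply/ltP.
have cp : coupling nu (prodm nu) (fun p => nu p.1 * prodm nu p.2).
  split; first by move=> p; apply: Rmult_le_pos.
  split=> [s|t] /=; first by rewrite -mulR_sumr p1 Rmult_1_r.
  by rewrite -mulR_suml nu1 Rmult_1_l.
apply: Rle_trans (Dcut_le_cut_val n0 cp) _.
have Q0 : 0 <= cov_defect nu by apply: sqrt_pos.
apply: Rle_trans (_ : (INR n * cov_defect nu + sqrt (INR n)) / INR n <= _); last first.
  by apply: Req_le; field; lra.
apply: Rmult_le_compat_r; first by apply: Rlt_le; apply: Rinv_0_lt_compat.
apply: cut_val_le.
- by have := sqrt_pos (INR n); nra.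
- by move=> p; apply: Rmult_le_pos.
- by move=> A w; apply: prod_coupling_count_le.
Qed.

End CutMetric.

Lemma sqr_cov_le_var (T : finType) (nu h f : T -> R) :
  is_prob nu -> (forall s, 0 <= h s <= 1) ->
  (\big[Rplus/0]_s (nu s * (h s * f s)) - \big[Rplus/0]_s (nu s * f s) *
     \big[Rplus/0]_s (nu s * h s)) ^ 2 <=
  \big[Rplus/0]_s (nu s * f s ^ 2) - (\big[Rplus/0]_s (nu s * f s)) ^ 2.
Proof.
case=> nu0 nu1 h01.
set m := \big[Rplus/0]_s (nu s * f s).
have -> : \big[Rplus/0]_s (nu s * (h s * f s)) - m * \big[Rplus/0]_s (nu s * h s) =
          \big[Rplus/0]_s (nu s * h s * (f s - m)).
  by rewrite mulR_sumr -sumR_sub; apply: eq_bigr => s _; ring.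
have -> : \big[Rplus/0]_s (nu s * f s ^ 2) - m ^ 2 =
          \big[Rplus/0]_s (nu s * (f s - m) ^ 2).
  have -> : \big[Rplus/0]_s (nu s * (f s - m) ^ 2) = \big[Rplus/0]_s
     (nu s * f s ^ 2 + ((- 2 * m) * (nu s * f s) + m ^ 2 * nu s))
    by apply: eq_bigr => s _; ring.
  by rewrite !big_split /= -!mulR_sumr nu1 -/m; ring.
have h2_le1 : \big[Rplus/0]_(s <- index_enum T | predT s) (nu s * h s ^ 2) <= 1.
  rewrite -nu1; apply: sumR_le => s _; have [h0 h1] := h01 s.
  by rewrite -[X in _ <= X]Rmult_1_r; apply: Rmult_le_compat_l => //=; nra.
have var0 : 0 <= \big[Rplus/0]_(s <- index_enum T | predT s) (nu s * (f s - m) ^ 2).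
  by apply: sumR_ge0 => s _; apply: Rmult_le_pos => //; apply: pow2_ge_0.
have := @sumR_cauchy_schwarz _ (index_enum T) predT nu h (fun s => f s - m)
  (fun s _ => nu0 s).
move=> /Rle_trans; apply.
by rewrite -[X in _ <= X]Rmult_1_l; apply: Rmult_le_compat_r.
Qed.

Section Conditioning.
Variables (Om : finType) (n : nat) (mu : config Om n -> R).
Local Notation cfg := (config Om n).

Definition agree (I : {set 'I_n}) (s t : cfg) : bool := [forall i in I, s i == t i].
Definition agree_mass I (t : cfg) : R :=
  \big[Rplus/0]_(s : cfg) (mu s * ind (agree I s t)).
Definition cond I (t : cfg) : cfg -> R :=
  fun s => mu s * ind (agree I s t) / agree_mass I t.

Lemma agree_refl I s : agree I s s.
Proof. by apply/forall_inP. Qed.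

Lemma agree_sym I s t : agree I s t = agree I t s.
Proof. by apply/forall_inP/forall_inP => h i iI; rewrite eq_sym; apply: h. Qed.

Lemma agree_trans I s t u : agree I s t -> agree I t u -> agree I s u.
Proof.
move=> /forall_inP h1 /forall_inP h2; apply/forall_inP => i iI.
by rewrite (eqP (h1 i iI)) h2.
Qed.

Lemma agree_sub (I J : {set 'I_n}) s t : I \subset J -> agree J s t -> agree I s t.
Proof.
by move=> /subsetP IJ /forall_inP h; apply/forall_inP => i iI; apply: h (IJ _ iI).
Qed.

Lemma agree_eqr I s t t' : agree I t t' -> agree I s t = agree I s t'.
Proof.
move=> h; apply/idP/idP => h'; first exact: agree_trans h' h.
by apply: agree_trans h' _; rewrite agree_sym.
Qed.

Lemma agree_mass_eq I t t' : agree I t t' -> agree_mass I t = agree_mass I t'.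
Proof. by move=> h; apply: eq_bigr => s _; rewrite (agree_eqr s h). Qed.

Lemma agree_mass_gt0 I t : is_prob mu -> 0 < mu t -> 0 < agree_mass I t.
Proof.
case=> m0 _ mt; apply: Rlt_le_trans (_ : mu t * ind (agree I t t) <= _).
  by rewrite agree_refl /ind Rmult_1_r.
by apply: sumR_ge_term => s; apply: Rmult_le_pos => //; apply: ind_ge0.
Qed.

Lemma cond_prob I t : is_prob mu -> 0 < mu t -> is_prob (cond I t).
Proof.
move=> Pm mt; have Zp := agree_mass_gt0 I Pm mt; case: (Pm) => m0 _; split.
  move=> s; rewrite /cond; apply: Rmult_le_pos; last by apply: Rinv_ge0; lra.
  by apply: Rmult_le_pos => //; apply: ind_ge0.
by rewrite /cond -mulR_suml -/(agree_mass I t); field; lra.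
Qed.

(* Law of total expectation over the J-agreement classes. *)
Lemma sum_expect_cond J (c : cfg -> R) f : is_prob mu ->
  (forall s t, agree J s t -> c s = c t) ->
  \big[Rplus/0]_(t : cfg) (c t * mu t * expect (cond J t) f) =
  \big[Rplus/0]_(t : cfg) (c t * mu t * f t).
Proof.
move=> Pm cJ; case: (Pm) => m0 _.
rewrite (eq_bigr (fun t => \big[Rplus/0]_(s : cfg)
   (c t * mu t * (mu s * ind (agree J s t) / agree_mass J t * f s)))); last first.
  by move=> t _; rewrite /expect mulR_sumr.
rewrite exchange_big /=; apply: eq_bigr => s _.
rewrite (eq_bigr (fun t => (c s * mu s * f s / agree_mass J s) *
                           (mu t * ind (agree J t s)))); last first.
  move=> t _; rewrite (agree_sym J t s).
  case As: (agree J s t); last by rewrite /ind /Rdiv; ring.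
  by rewrite (cJ _ _ As) (agree_mass_eq As) /ind /Rdiv; ring.
rewrite -mulR_sumr -/(agree_mass J s).
case: (Rle_lt_or_eq_dec _ _ (m0 s)) => [ms|<-]; last by rewrite /Rdiv; ring.
by have := agree_mass_gt0 J Pm ms => Zp; field; lra.
Qed.

Lemma mix_expect_cond J f : is_prob mu ->
  \big[Rplus/0]_(t : cfg) (mu t * expect (cond J t) f) = expect mu f.
Proof.
move=> Pm; have := @sum_expect_cond J (fun _ => 1) f Pm (fun _ _ _ => erefl).
rewrite (eq_bigr (fun t => mu t * expect (cond J t) f)); last by move=> *; ring.
by move=> ->; apply: eq_bigr => *; ring.
Qed.

Lemma expect_cond_tower (I J : {set 'I_n}) t0 f : is_prob mu -> I \subset J ->
  expect (cond I t0) (fun t => expect (cond J t) f) = expect (cond I t0) f.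
Proof.
move=> Pm IJ.
have cJ : forall s t, agree J s t ->
    ind (agree I s t0) / agree_mass I t0 = ind (agree I t t0) / agree_mass I t0.
  move=> s t hst; rewrite (agree_sym I s t0) (agree_sym I t t0).
  by rewrite (agree_eqr t0 (agree_sub IJ hst)).
have H := @sum_expect_cond J (fun t => ind (agree I t t0) / agree_mass I t0) f Pm cJ.
rewrite /expect /cond in H *.
transitivity (\big[Rplus/0]_t (ind (agree I t t0) / agree_mass I t0 * mu t *
   \big[Rplus/0]_s (mu s * ind (agree J s t) / agree_mass J t * f s))).
  by apply: eq_bigr => t _; congr (_ * _); rewrite /Rdiv; ring.
by rewrite H; apply: eq_bigr => t _; rewrite /Rdiv; ring.
Qed.

Lemma expect_cond_mull J s (h : cfg -> R) g :
  (forall s', agree J s' s -> h s' = h s) ->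
  expect (cond J s) (fun s' => h s' * g s') = h s * expect (cond J s) g.
Proof.
move=> hJ; rewrite -expectZ; apply: eq_bigr => s' _.
case As: (agree J s' s); first by rewrite (hJ _ As); ring.
by rewrite /cond As /ind /Rdiv; ring.
Qed.

Definition cond_mean I t i w := mean (cond I t) i w.
Definition potential I := \big[Rplus/0]_(t : cfg) (mu t *
   \big[Rplus/0]_(i : 'I_n) \big[Rplus/0]_(w : Om) cond_mean I t i w ^ 2).
Definition cond_energy I := \big[Rplus/0]_(t : cfg) (mu t * cov_energy (cond I t)).

Lemma cond_energy_ge0 I : is_prob mu -> 0 <= cond_energy I.
Proof.
case=> m0 _; apply: sumR_ge0 => t _.
by apply: Rmult_le_pos => //; apply: cov_energy_ge0.
Qed.

(* Given sigma_I, Cov(1{sigma_i=w}, 1{sigma_j=w}) is the covariance of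
   1{sigma_j=w} with the refined conditional mean given sigma_{I+j}, which is
   bounded by the variance of that refined mean. *)
Lemma sqr_cond_cov_le I j i w t : is_prob mu -> 0 < mu t ->
  cov (cond I t) i j w ^ 2 <=
  expect (cond I t) (fun s => cond_mean (j |: I) s i w ^ 2) - cond_mean I t i w ^ 2.
Proof.
move=> Pm mt; set J := j |: I.
have IJ : I \subset J by apply: subsetUr.
have Pc := cond_prob I Pm mt.
have mean2E : expect (cond I t) (fun s => indic i w s * indic j w s) =
              expect (cond I t) (fun s => indic j w s * cond_mean J s i w).
  rewrite -(expect_cond_tower t _ Pm IJ); apply: eq_expect => s.
  rewrite (eq_expect (fun s' => indic j w s' * indic i w s')); last by move=> s'; ring.
  rewrite expect_cond_mull // => s' /forall_inP h.
  by rewrite /indic (eqP (h j (setU11 _ _))).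
have meanE : cond_mean I t i w = expect (cond I t) (fun s => cond_mean J s i w).
  by rewrite /cond_mean /mean -(expect_cond_tower t _ Pm IJ).
rewrite /cov mean2E -/(cond_mean I t i w) meanE.
apply: (sqr_cov_le_var (fun s => cond_mean J s i w) Pc) => s.
by split; [apply: ind_ge0 | apply: ind_le1].
Qed.

Lemma sum_sqr_cond_cov_le I j : is_prob mu ->
  \big[Rplus/0]_(t : cfg) (mu t * \big[Rplus/0]_(i : 'I_n) \big[Rplus/0]_(w : Om)
     cov (cond I t) i j w ^ 2) <= potential (j |: I) - potential I.
Proof.
move=> Pm; case: (Pm) => m0 _.
apply: Rle_trans (_ : \big[Rplus/0]_(t : cfg) (mu t * \big[Rplus/0]_(i : 'I_n)
   \big[Rplus/0]_(w : Om) (expect (cond I t) (fun s => cond_mean (j |: I) s i w ^ 2)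
     - cond_mean I t i w ^ 2)) <= _).
  apply: sumR_le => t _.
  case: (Rle_lt_or_eq_dec _ _ (m0 t)) => [mt|<-]; last by rewrite !Rmult_0_l; lra.
  apply: Rmult_le_compat_l; first lra.
  by apply: sumR_le => i _; apply: sumR_le => w _; apply: sqr_cond_cov_le.
apply: Req_le.
rewrite (_ : potential (j |: I) = expect mu (fun s => \big[Rplus/0]_(i : 'I_n)
   \big[Rplus/0]_(w : Om) cond_mean (j |: I) s i w ^ 2)) //.
rewrite -(mix_expect_cond I _ Pm) /potential -sumR_sub.
apply: eq_bigr => t _; rewrite -Rmult_minus_distr_l; congr (_ * _).
rewrite expect_sum -sumR_sub; apply: eq_bigr => i _.
by rewrite expect_sum -sumR_sub.
Qed.

Lemma cond_energy_le_potential_gain I : is_prob mu ->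
  cond_energy I <= \big[Rplus/0]_(j : 'I_n) (potential (j |: I) - potential I).
Proof.
move=> Pm; rewrite /cond_energy /cov_energy.
rewrite (eq_bigr (fun t => \big[Rplus/0]_(j : 'I_n) (mu t * \big[Rplus/0]_(i : 'I_n)
   \big[Rplus/0]_(w : Om) cov (cond I t) i j w ^ 2))); last first.
  by move=> t _; rewrite mulR_sumr.
by rewrite exchange_big /=; apply: sumR_le => j _; apply: sum_sqr_cond_cov_le.
Qed.

Lemma potential_bounds I : is_prob mu -> 0 <= potential I <= INR n.
Proof.
move=> Pm; case: (Pm) => m0 m1.
have term_bounds t : 0 <= mu t * \big[Rplus/0]_(i : 'I_n) \big[Rplus/0]_(w : Om)
    cond_mean I t i w ^ 2 <= mu t * INR n.
  case: (Rle_lt_or_eq_dec _ _ (m0 t)) => [mt|<-]; last by rewrite !Rmult_0_l; lra.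
  have Pc := cond_prob I Pm mt.
  have S0 : 0 <= \big[Rplus/0]_(i : 'I_n) \big[Rplus/0]_(w : Om) cond_mean I t i w ^ 2.
    by do 2 (apply: sumR_ge0 => ? _); apply: pow2_ge_0.
  split; first by apply: Rmult_le_pos; lra.
  apply: Rmult_le_compat_l; first lra.
  rewrite (_ : INR n = \big[Rplus/0]_(i : 'I_n) 1); last first.
    by rewrite sumR_const card_ord Rmult_1_r.
  apply: sumR_le => i _.
  rewrite -(sum_mean i Pc); apply: sumR_le => w _.
  by have := mean_bounds i w Pc; rewrite -/(cond_mean I t i w) => ?; nra.
split; first by apply: sumR_ge0 => t _; case: (term_bounds t).
apply: Rle_trans (_ : \big[Rplus/0]_(t : cfg) (mu t * INR n) <= _).
  by apply: sumR_le => t _; case: (term_bounds t).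
by rewrite -mulR_suml m1; lra.
Qed.

End Conditioning.

Section RandomSubsets.
Variable n : nat.

Definition toggle (p : {set 'I_n} * 'I_n) : {set 'I_n} * 'I_n :=
  (if p.2 \in p.1 then p.1 :\ p.2 else p.2 |: p.1, p.2).

Lemma toggleK : involutive toggle.
Proof.
case=> A j; rewrite /toggle /=; case jA: (j \in A) => /=.
  by rewrite in_setD1 eqxx /= setD1K.
by rewrite setU11 setU1K ?jA.
Qed.

Lemma sum_card_setU1 (F : {set 'I_n} -> R) t :
  \big[Rplus/0]_(I : {set 'I_n} | #|I| == t) \big[Rplus/0]_(j | j \notin I) F (j |: I) =
  INR t.+1 * \big[Rplus/0]_(J : {set 'I_n} | #|J| == t.+1) F J.
Proof.
rewrite mulR_sumr.
have -> : \big[Rplus/0]_(J : {set 'I_n} | #|J| == t.+1) (INR t.+1 * F J) =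
   \big[Rplus/0]_(J : {set 'I_n} | #|J| == t.+1) \big[Rplus/0]_(j in J) F J.
  by apply: eq_bigr => J /eqP cJ; rewrite sumR_const cJ.
rewrite !pair_big_dep /= [RHS](reindex_inj (inv_inj toggleK)).
apply: eq_big => [[A j]|[A j]] /=.
  rewrite /toggle /=; case jA: (j \in A) => /=.
    by rewrite in_setD1 eqxx !andbF.
  by rewrite setU11 cardsU1 jA andbT.
by move=> /andP [_ jn]; rewrite /toggle /= (negbTE jn).
Qed.

Lemma sumR_notin_const (I : {set 'I_n}) c :
  \big[Rplus/0]_(j | j \notin I) c = (INR n - INR #|I|) * c.
Proof.
have := sumR_const [pred j : 'I_n | true] c.
rewrite (bigID (fun j => j \in I)) /= sumR_const.
have -> : #|[pred j : 'I_n | true]| = n by rewrite -[RHS]card_ord; apply: eq_card.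
by move=> h; rewrite Rmult_minus_distr_r -h /Rminus Rplus_comm -Rplus_assoc Rplus_opp_l Rplus_0_l.
Qed.

Lemma sumR_card_const t c :
  \big[Rplus/0]_(I : {set 'I_n} | #|I| == t) c = INR 'C(n, t) * c.
Proof.
have := sumR_const [pred I : {set 'I_n} | #|I| == t] c.
have -> : #|[pred I : {set 'I_n} | #|I| == t]| = 'C(n, t).
  by rewrite -cardsE card_draws card_ord.
by move=> <-; apply: eq_bigl => I.
Qed.

Lemma INR_mul_bin_left t : (t < n)%N ->
  INR t.+1 * INR 'C(n, t.+1) = (INR n - INR t) * INR 'C(n, t).
Proof.
move=> tn; have := f_equal INR (mul_bin_left n t).
by rewrite !mult_INR minus_INR //; apply/leP; apply: ltnW.
Qed.

Lemma bin_mulV_le1 t : INR 'C(n, t) * / INR 'C(n, t) <= 1.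
Proof.
case: (Req_dec (INR 'C(n, t)) 0) => [->|h]; first by rewrite Rmult_0_l; lra.
by rewrite Rinv_r //; lra.
Qed.

Definition avg_card t (F : {set 'I_n} -> R) :=
  \big[Rplus/0]_(I : {set 'I_n} | #|I| == t) (/ INR 'C(n, t) * F I).

Lemma avg_card_bounds t (F : {set 'I_n} -> R) M : 0 <= M ->
  (forall I, 0 <= F I <= M) -> 0 <= avg_card t F <= M.
Proof.
move=> M0 FM; have Ci := Rinv_ge0 (pos_INR 'C(n, t)).
split; first by apply: sumR_ge0 => I _; apply: Rmult_le_pos => //; case: (FM I).
apply: Rle_trans (_ : \big[Rplus/0]_(I : {set 'I_n} | #|I| == t)
   (/ INR 'C(n, t) * M) <= _).
  by apply: sumR_le => I _; apply: Rmult_le_compat_l => //; case: (FM I).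
rewrite sumR_card_const -Rmult_assoc; have := bin_mulV_le1 t; nra.
Qed.

Section Potential.
Variables (Om : finType) (mu : config Om n -> R).
Hypothesis mu_prob : is_prob mu.

Lemma sum_card_cond_energy_le t :
  \big[Rplus/0]_(I : {set 'I_n} | #|I| == t) cond_energy mu I <=
  INR t.+1 * \big[Rplus/0]_(J : {set 'I_n} | #|J| == t.+1) potential mu J
  - (INR n - INR t) * \big[Rplus/0]_(I : {set 'I_n} | #|I| == t) potential mu I.
Proof.
apply: Rle_trans (_ : \big[Rplus/0]_(I : {set 'I_n} | #|I| == t)
    (\big[Rplus/0]_(j | j \notin I) potential mu (j |: I) -
     (INR n - INR t) * potential mu I) <= _); last first.
  by rewrite sumR_sub sum_card_setU1 -mulR_sumr; apply: Rle_refl.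
apply: sumR_le => I /eqP cI.
apply: Rle_trans (cond_energy_le_potential_gain I mu_prob) _.
rewrite (bigID (fun j => j \in I)) /= big1; last first.
  by move=> j jI; rewrite (setUidPr _) ?sub1set //; ring.
by rewrite Rplus_0_l sumR_sub sumR_notin_const cI; apply: Rle_refl.
Qed.

(* (n - t) C(n,t) = (t+1) C(n,t+1) turns the sums into averages; since the
   left side is nonnegative, so is the gain and n - t may be enlarged to n. *)
Lemma avg_energy_le_potential_gain t : (t < n)%N ->
  avg_card t (cond_energy mu) <=
  INR n * (avg_card t.+1 (potential mu) - avg_card t (potential mu)).
Proof.
move=> tn.
have C0 : 0 < INR 'C(n, t) by apply: lt_0_INR; apply/ltP; rewrite bin_gt0 ltnW.
have C1 : 0 < INR 'C(n, t.+1) by apply: lt_0_INR; apply/ltP; rewrite bin_gt0.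
have tn' : INR t < INR n by apply: lt_INR; apply/ltP.
have t0 := pos_INR t.
have avgE t' F : avg_card t' F =
    / INR 'C(n, t') * \big[Rplus/0]_(I : {set 'I_n} | #|I| == t') F I.
  by rewrite /avg_card mulR_sumr.
have W0 : 0 <= avg_card t (cond_energy mu).
  by apply: sumR_ge0 => I _; apply: Rmult_le_pos;
    [apply: Rinv_ge0; lra | apply: cond_energy_ge0].
have gain : avg_card t (cond_energy mu) <=
    (INR n - INR t) * (avg_card t.+1 (potential mu) - avg_card t (potential mu)).
  rewrite !avgE.
  set S1 := \big[Rplus/0]_(J : {set 'I_n} | #|J| == t.+1) potential mu J.
  set S0 := \big[Rplus/0]_(J : {set 'I_n} | #|J| == t) potential mu J.
  have -> : (INR n - INR t) * (/ INR 'C(n, t.+1) * S1 - / INR 'C(n, t) * S0) =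
            / INR 'C(n, t) * (INR t.+1 * S1 - (INR n - INR t) * S0).
    have -> : INR n - INR t = INR t.+1 * INR 'C(n, t.+1) / INR 'C(n, t).
      by rewrite INR_mul_bin_left //; field; lra.
    by field; lra.
  apply: Rmult_le_compat_l; first by apply: Rinv_ge0; lra.
  exact: sum_card_cond_energy_le.
have : 0 <= avg_card t.+1 (potential mu) - avg_card t (potential mu) by nra.
nra.
Qed.

Lemma sum_avg_energy_le T : (T < n)%N ->
  \big[Rplus/0]_(1%N <= t < T.+1) avg_card t (cond_energy mu) <= INR n * INR n.
Proof.
have pot_bounds t := avg_card_bounds t (pos_INR n) (fun I => potential_bounds I mu_prob).
move=> Tn; suff : \big[Rplus/0]_(1%N <= t < T.+1) avg_card t (cond_energy mu) <=
       INR n * (avg_card T.+1 (potential mu) - avg_card 1%N (potential mu)).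
  by have := pot_bounds 1%N; have := pot_bounds T.+1; have := pos_INR n; nra.
elim: T Tn => [|T IH] Tn; first by rewrite big_geq // Rminus_diag Rmult_0_r; lra.
rewrite big_nat_recr //=.
by have := IH (ltnW Tn); have := avg_energy_le_potential_gain Tn; lra.
Qed.

End Potential.

Section RandomSize.
Variables (N : nat) (theta : nat -> R).
Hypotheses (theta_ge0 : forall t, 0 <= theta t)
           (theta_sum1 : \big[Rplus/0]_(t < N) theta t = 1).

Lemma avgI_le (F G : {set 'I_n} -> R) : (forall I, F I <= G I) ->
  avgI N theta F <= avgI N theta G.
Proof.
move=> FG; apply: sumR_le => t _; apply: Rmult_le_compat_l => //.
apply: sumR_le => I _; apply: Rmult_le_compat_l => //.
exact: Rinv_ge0 (pos_INR _).
Qed.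

Lemma avgID (F G : {set 'I_n} -> R) :
  avgI N theta (fun I => F I + G I) = avgI N theta F + avgI N theta G.
Proof.
rewrite /avgI -big_split; apply: eq_bigr => t _ /=.
rewrite -Rmult_plus_distr_l -big_split; congr (_ * _); apply: eq_bigr => I _ /=.
by rewrite Rmult_plus_distr_l.
Qed.

Lemma avgIZ c (F : {set 'I_n} -> R) :
  avgI N theta (fun I => c * F I) = c * avgI N theta F.
Proof.
rewrite /avgI mulR_sumr; apply: eq_bigr => t _ /=.
rewrite (eq_bigr (fun I => c * (/ INR 'C(n, t) * F I))); last by move=> I _; ring.
by rewrite -mulR_sumr; ring.
Qed.

Lemma avgI_cst_le c : 0 <= c -> avgI N theta (fun _ : {set 'I_n} => c) <= c.
Proof.
move=> c0; apply: Rle_trans (_ : \big[Rplus/0]_(t < N) (theta t * c) <= _); last first.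
  by rewrite -mulR_suml theta_sum1; lra.
apply: sumR_le => t _; apply: Rmult_le_compat_l => //.
by rewrite sumR_card_const -Rmult_assoc; have := bin_mulV_le1 t; nra.
Qed.

Lemma avgI_sqrt_le (F : {set 'I_n} -> R) : (forall I, 0 <= F I) ->
  avgI N theta (fun I => sqrt (F I)) <= sqrt (avgI N theta F).
Proof.
move=> F0; rewrite /avgI.
have Ci t := Rinv_ge0 (pos_INR 'C(n, t)).
apply: Rle_trans (_ : \big[Rplus/0]_(t < N) (theta t *
   sqrt (\big[Rplus/0]_(I : {set 'I_n} | #|I| == t) (/ INR 'C(n, t) * F I))) <= _).
  apply: sumR_le => t _; apply: Rmult_le_compat_l => //.
  apply: jensen_sqrt => [I _|I _|]; [exact: Ci | exact: F0 |].
  by rewrite sumR_card_const; apply: bin_mulV_le1.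
apply: jensen_sqrt => [t _|t _|]; [exact: theta_ge0 | | by rewrite theta_sum1; lra].
by apply: sumR_ge0 => I _; apply: Rmult_le_pos.
Qed.

End RandomSize.

End RandomSubsets.

Definition theta_unif (T t : nat) : R := if (0 < t <= T)%N then / INR T else 0.

Lemma theta_unif_ge0 T t : 0 <= theta_unif T t.
Proof. by rewrite /theta_unif; case: ifP => _; [apply: Rinv_ge0; apply: pos_INR | lra]. Qed.

Lemma sum_theta_unif T (F : nat -> R) :
  \big[Rplus/0]_(t < T.+1) (theta_unif T t * F t) =
  / INR T * \big[Rplus/0]_(1%N <= t < T.+1) F t.
Proof.
rewrite -(big_mkord xpredT (fun t => theta_unif T t * F t)) big_ltn //.
rewrite /theta_unif /= Rmult_0_l Rplus_0_l mulR_sumr.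
by apply: eq_big_nat => t /andP [t1 tT]; rewrite t1 -ltnS tT.
Qed.

Lemma theta_unif_sum1 T : (0 < T)%N -> \big[Rplus/0]_(t < T.+1) theta_unif T t = 1.
Proof.
move=> T0; have Tp : 0 < INR T by apply: lt_0_INR; apply/ltP.
rewrite (eq_bigr (fun t : 'I_T.+1 => theta_unif T t * 1)); last by move=> t _; ring.
rewrite (sum_theta_unif T (fun _ => 1)) (_ : \big[Rplus/0]_(1%N <= t < T.+1) 1 = INR T); first by field; lra.
elim: T {T0 Tp} => [|k IH]; first by rewrite big_geq.
by rewrite big_nat_recr //= IH; case: k {IH} => [|k] /=; lra.
Qed.

Lemma avgI_cond_energy_le (Om : finType) n (mu : config Om n -> R) T :
  is_prob mu -> (T < n)%N ->
  avgI T.+1 (theta_unif T) (cond_energy mu) <= / INR T * (INR n * INR n).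
Proof.
move=> Pm Tn.
rewrite [avgI _ _ _](sum_theta_unif T (fun t => avg_card t (cond_energy mu))).
apply: Rmult_le_compat_l; first by apply: Rinv_ge0; apply: pos_INR.
exact: sum_avg_energy_le.
Qed.

Section Transfer.
Variables (Om : finType) (n : nat) (mu : config Om n -> R) (I : {set 'I_n}).
Hypothesis mu_prob : is_prob mu.
Local Notation cfg := (config Om n).
Local Notation sig_t := {ffun {i : 'I_n | i \in I} -> Om}.

Definition restrict (t : cfg) : sig_t := [ffun x => t (val x)].

Lemma cylE (s : sig_t) t : cyl s t = (s == restrict t).
Proof.
apply/forallP/eqP => [h|->].
  by apply/ffunP => x; rewrite ffunE (eqP (h x)).
by move=> x; rewrite ffunE.
Qed.

Lemma cyl_agree (s : sig_t) t u : cyl s t -> cyl s u = agree I u t.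
Proof.
move=> /forallP ht; apply/forallP/forall_inP => [hu i iI|hu x].
  by have := hu (exist _ i iI); have := ht (exist _ i iI) => /= /eqP -> /eqP ->.
by rewrite -(eqP (ht x)); apply: hu; exact: (valP x).
Qed.

Lemma margI_agree_mass (s : sig_t) t : cyl s t -> margI mu s = agree_mass mu I t.
Proof.
move=> ct; rewrite /margI /agree_mass big_mkcond; apply: eq_bigr => u _.
by rewrite (cyl_agree u ct) /ind; case: (agree I u t); ring.
Qed.

Lemma condmE (s : sig_t) t : cyl s t -> 0 < mu t -> condm mu s = cond mu I t.
Proof.
move=> ct mt; apply: functional_extensionality => u.
rewrite /condm (margI_agree_mass ct).
case: (Rlt_dec 0 (agree_mass mu I t)) => [r|[]]; last exact: agree_mass_gt0.
by rewrite /cond (cyl_agree u ct) /Rdiv /=; ring.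
Qed.

Lemma sum_margI_condm (G : (cfg -> R) -> R) :
  \big[Rplus/0]_(s : sig_t) (margI mu s * G (condm mu s)) =
  \big[Rplus/0]_(t : cfg) (mu t * G (cond mu I t)).
Proof.
case: (mu_prob) => m0 _.
rewrite (eq_bigr (fun s => \big[Rplus/0]_(t : cfg)
   (ind (cyl s t) * (mu t * G (cond mu I t))))); last first.
  move=> s _; rewrite /margI mulR_suml big_mkcond; apply: eq_bigr => t _.
  case ct: (cyl s t); last by rewrite /ind; ring.
  case: (Rle_lt_or_eq_dec _ _ (m0 t)) => [mt|<-]; last by rewrite /ind; ring.
  by rewrite (condmE ct mt) /ind; ring.
rewrite exchange_big /=; apply: eq_bigr => t _.
rewrite -mulR_suml (eq_bigr (fun s => ind (s == restrict t))); last first.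
  by move=> s _; rewrite cylE.
rewrite (bigD1 (restrict t)) //= big1 /ind ?eqxx; first by ring.
by move=> s /negbTE ->.
Qed.

Lemma margI_ge0 (s : sig_t) : 0 <= margI mu s.
Proof. by case: mu_prob => m0 _; apply: sumR_ge0. Qed.

Lemma condm_ge0 (s : sig_t) u : 0 <= condm mu s u.
Proof.
case: (mu_prob) => m0 _; rewrite /condm.
case: (Rlt_dec 0 (margI mu s)) => [h|h].
  apply: Rmult_le_pos; last by apply: Rinv_ge0; lra.
  by apply: Rmult_le_pos => //; apply: ind_ge0.
apply: Rmult_le_pos; first exact: ind_ge0.
by apply: Rinv_ge0; apply: sumR_ge0 => *; lra.
Qed.

Lemma condm_prob (s : sig_t) : 0 < margI mu s -> is_prob (condm mu s).
Proof.
move=> h; split=> [u|]; first exact: condm_ge0.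
rewrite /condm; case: (Rlt_dec 0 (margI mu s)) => [r|//].
rewrite -mulR_suml.
have -> : \big[Rplus/0]_(u : cfg) (ind (cyl s u) * mu u) = margI mu s.
  by rewrite /margI [RHS]big_mkcond; apply: eq_bigr => u _; rewrite /ind;
    case: (cyl s u); ring.
by field; lra.
Qed.

Lemma sum_Dcut_condm_le : (0 < n)%N ->
  \big[Rplus/0]_(s : sig_t) (margI mu s * Dcut (condm mu s) (prodm (condm mu s))) <=
  \big[Rplus/0]_(t : cfg) (mu t * (cov_defect (cond mu I t) + sqrt (INR n) / INR n)).
Proof.
move=> n0; case: (mu_prob) => m0 _.
rewrite (sum_margI_condm (fun nu => Dcut nu (prodm nu))).
apply: sumR_le => t _.
case: (Rle_lt_or_eq_dec _ _ (m0 t)) => [mt|<-]; last by rewrite !Rmult_0_l; lra.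
apply: Rmult_le_compat_l; first lra.
by apply: Dcut_prodm_le => //; apply: cond_prob.
Qed.

Definition mix_coupling (p : cfg * cfg) : R :=
  \big[Rplus/0]_(s : sig_t) (margI mu s * (condm mu s p.1 * prodm (condm mu s) p.2)).

Lemma mix_coupling_ge0 p : 0 <= mix_coupling p.
Proof.
apply: sumR_ge0 => s _; apply: Rmult_le_pos; first exact: margI_ge0.
apply: Rmult_le_pos; first exact: condm_ge0.
by apply: prodm_ge0 => v; apply: condm_ge0.
Qed.

Lemma coupling_mix : coupling mu (barI mu I) mix_coupling.
Proof.
split; first exact: mix_coupling_ge0.
split=> [u|t]; rewrite /mix_coupling exchange_big /=.
- have mix_cond : \big[Rplus/0]_(t : cfg) (mu t * cond mu I t u) = mu u.
    have := mix_expect_cond I (fun v => ind (v == u)) mu_prob.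
    rewrite /expect sum_mul_ind_eq => <-; apply: eq_bigr => t _.
    by rewrite sum_mul_ind_eq.
  rewrite -[RHS]mix_cond -(sum_margI_condm (fun nu => nu u)).
  apply: eq_bigr => s _.
  rewrite (eq_bigr (fun t => margI mu s * condm mu s u * prodm (condm mu s) t));
    last by move=> t _; ring.
  rewrite -mulR_sumr.
  case: (Rle_lt_or_eq_dec _ _ (margI_ge0 s)) => [h|<-]; last by ring.
  by case: (prodm_prob (condm_prob h)) => _ ->; rewrite Rmult_1_r.
- rewrite /barI; apply: eq_bigr => s _.
  rewrite (eq_bigr (fun u => margI mu s * prodm (condm mu s) t * condm mu s u));
    last by move=> u _; ring.
  rewrite -mulR_sumr.
  case: (Rle_lt_or_eq_dec _ _ (margI_ge0 s)) => [h|<-]; last by ring.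
  by case: (condm_prob h) => _ ->; rewrite Rmult_1_r.
Qed.

Lemma Dcut_barI_le : (0 < n)%N ->
  Dcut mu (barI mu I) <=
  \big[Rplus/0]_(t : cfg) (mu t * (cov_defect (cond mu I t) + sqrt (INR n) / INR n)).
Proof.
move=> n0; case: (mu_prob) => m0 m1.
have np : 0 < INR n by apply: lt_0_INR; apply/ltP.
apply: Rle_trans (Dcut_le_cut_val n0 coupling_mix) _.
set M := \big[Rplus/0]_(t : cfg)
  (mu t * (INR n * cov_defect (cond mu I t) + sqrt (INR n))).
apply: Rle_trans (_ : M / INR n <= _); last first.
  rewrite /M /Rdiv mulR_suml; apply: Req_le; apply: eq_bigr => t _.
  by field; lra.
apply: Rmult_le_compat_r; first by apply: Rlt_le; apply: Rinv_0_lt_compat.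
apply: cut_val_le; [|exact: mix_coupling_ge0|].
  apply: sumR_ge0 => t _; apply: Rmult_le_pos => //.
  apply: Rplus_le_le_0_compat; last exact: sqrt_pos.
  by apply: Rmult_le_pos; [apply: pos_INR | apply: sqrt_pos].
move=> A w; rewrite /M -(sum_margI_condm (fun nu => INR n * cov_defect nu + sqrt (INR n))).
rewrite /mix_coupling (eq_bigr (fun p => \big[Rplus/0]_(s : sig_t) (margI mu s *
   (condm mu s p.1 * prodm (condm mu s) p.2 * Rabs (count A w p.1 - count A w p.2)))));
  last by move=> p _; rewrite mulR_suml; apply: eq_bigr => s _; ring.
rewrite exchange_big /=; apply: sumR_le => s _; rewrite -mulR_sumr.
case: (Rle_lt_or_eq_dec _ _ (margI_ge0 s)) => [h|<-]; last by rewrite !Rmult_0_l; lra.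
apply: Rmult_le_compat_l; first lra.
by apply: prod_coupling_count_le => //; apply: condm_prob.
Qed.

End Transfer.

Section MainBounds.
Variables (Om : finType) (n : nat) (mu : config Om n -> R) (T : nat).
Hypotheses (T_gt0 : (0 < T)%N) (T_lt_n : (T < n)%N) (mu_prob : is_prob mu).
Local Notation cfg := (config Om n).

Let n_gt0 : (0 < n)%N. Proof. exact: leq_ltn_trans T_lt_n. Qed.
Let INR_n_gt0 : 0 < INR n. Proof. by apply: lt_0_INR; apply/ltP. Qed.

Lemma sum_cov_defect_le I c :
  \big[Rplus/0]_(t : cfg) (mu t * (cov_defect (cond mu I t) + c)) <=
  sqrt (/ INR n * sqrt (cond_energy mu I)) + c.
Proof.
case: (mu_prob) => m0 m1.
rewrite (eq_bigr (fun t => mu t * cov_defect (cond mu I t) + c * mu t)); last first.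
  by move=> t _; ring.
rewrite big_split /= -mulR_sumr m1 Rmult_1_r; apply: Rplus_le_compat_r.
apply: Rle_trans.
  apply: (@jensen_sqrt _ _ predT mu (fun t => sqrt (cov_energy (cond mu I t)) / INR n)).
  - by move=> t _.
  - by move=> t _; apply: Rmult_le_pos; [apply: sqrt_pos | exact: Rinv_ge0 (pos_INR n)].
  - by rewrite m1; lra.
apply: sqrt_le_1_alt.
rewrite (eq_bigr (fun t => / INR n * (mu t * sqrt (cov_energy (cond mu I t)))));
  last by move=> t _; rewrite /Rdiv; ring.
rewrite -mulR_sumr; apply: Rmult_le_compat_l; first exact: Rinv_ge0 (pos_INR n).
apply: jensen_sqrt => // [t _|]; first exact: cov_energy_ge0.
by rewrite m1; lra.
Qed.

(* Jensen twice and E[cond_energy] <= n^2 / T. *)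
Lemma avgI_theta_unif_le (F : {set 'I_n} -> R) :
  (forall I, F I <= \big[Rplus/0]_(t : cfg)
                     (mu t * (cov_defect (cond mu I t) + sqrt (INR n) / INR n))) ->
  avgI T.+1 (theta_unif T) F <= sqrt (/ sqrt (INR T)) + sqrt (INR n) / INR n.
Proof.
move=> FB.
have INR_T_gt0 : 0 < INR T by apply: lt_0_INR; apply/ltP.
have th0 := theta_unif_ge0 T; have th1 := theta_unif_sum1 T_gt0.
have invn0 : 0 <= / INR n by apply: Rinv_ge0; lra.
have FB' I : F I <= sqrt (/ INR n * sqrt (cond_energy mu I)) + sqrt (INR n) / INR n.
  exact: Rle_trans (FB I) (sum_cov_defect_le _ _).
apply: Rle_trans (avgI_le T.+1 th0 FB') _; rewrite avgID; apply: Rplus_le_compat.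
- apply: Rle_trans (avgI_sqrt_le th0 th1 _) _.
    by move=> I; apply: Rmult_le_pos => //; apply: sqrt_pos.
  apply: sqrt_le_1_alt; rewrite avgIZ.
  apply: Rle_trans (_ : / INR n * sqrt (/ INR T * (INR n * INR n)) <= _).
    apply: Rmult_le_compat_l => //.
    apply: Rle_trans (avgI_sqrt_le th0 th1 _) _.
      by move=> I; apply: cond_energy_ge0.
    by apply: sqrt_le_1_alt; apply: avgI_cond_energy_le.
  rewrite sqrt_mult_alt; last by apply: Rinv_ge0; lra.
  rewrite sqrt_square; last lra.
  rewrite sqrt_inv; apply: Req_le; field.
  by split; [apply: Rgt_not_eq; apply: sqrt_lt_R0 | lra].
- apply: avgI_cst_le => //.
  by apply: Rmult_le_pos => //; apply: sqrt_pos.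
Qed.

Lemma expect_i_le :
  expect_i T.+1 (theta_unif T) mu <= sqrt (/ sqrt (INR T)) + sqrt (INR n) / INR n.
Proof. by apply: avgI_theta_unif_le => I; apply: sum_Dcut_condm_le. Qed.

Lemma expect_ii_le :
  expect_ii T.+1 (theta_unif T) mu <= sqrt (/ sqrt (INR T)) + sqrt (INR n) / INR n.
Proof. by apply: avgI_theta_unif_le => I; apply: Dcut_barI_le. Qed.

End MainBounds.

Lemma exists_nat_between K : 0 <= K -> exists T : nat, K < INR T <= K + 1.
Proof.
move=> K0; have [h1 h2] := archimed K.
have z0 : (0 <= up K)%Z by apply: le_IZR; lra.
by exists (Z.to_nat (up K)); rewrite INR_IZR_INZ ZArith.Znat.Z2Nat.id //; lra.
Qed.

Lemma sqrt_inv_sqrt_lt a x : 0 < a -> 16 / a ^ 4 < x -> sqrt (/ sqrt x) < a / 2.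
Proof.
move=> a0 hx.
have a2 : 0 < a ^ 2 by apply: pow_lt.
have a4 : 0 < a ^ 4 by apply: pow_lt.
have q0 : 0 < 4 / a ^ 2 by apply: Rdiv_lt_0_compat; lra.
have sqrt_x : 4 / a ^ 2 < sqrt x.
  rewrite -[4 / a ^ 2]sqrt_pow2; last lra.
  by apply: sqrt_lt_1_alt; split; [apply: pow2_ge_0 | rewrite (_ : _ ^ 2 = 16 / a ^ 4);
    [lra | field; lra]].
have inv_sqrt_x : / sqrt x < a ^ 2 / 4.
  rewrite (_ : a ^ 2 / 4 = / (4 / a ^ 2)); last by field; lra.
  by apply: Rinv_lt_contravar => //; apply: Rmult_lt_0_compat; lra.
rewrite -[a / 2]sqrt_pow2; last lra.
apply: sqrt_lt_1_alt; split; first by apply: Rlt_le; apply: Rinv_0_lt_compat; lra.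
by rewrite (_ : (a / 2) ^ 2 = a ^ 2 / 4); [lra | field].
Qed.

Lemma sqrt_div_lt a x : 0 < a -> 4 / a ^ 2 < x -> sqrt x / x < a / 2.
Proof.
move=> a0 hx.
have a2 : 0 < a ^ 2 by apply: pow_lt.
have q0 : 0 < 4 / a ^ 2 by apply: Rdiv_lt_0_compat; lra.
have x0 : 0 < x by lra.
have sqrt_x : 2 / a < sqrt x.
  rewrite -[2 / a]sqrt_pow2; last by apply: Rlt_le; apply: Rdiv_lt_0_compat; lra.
  by apply: sqrt_lt_1_alt; split; [apply: pow2_ge_0 | rewrite (_ : _ ^ 2 = 4 / a ^ 2);
    [lra | field; lra]].
have sx : 0 < sqrt x by apply: sqrt_lt_R0.
rewrite (_ : sqrt x / x = / sqrt x); last first.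
  by rewrite -{2}(sqrt_sqrt x); [field; lra | lra].
rewrite (_ : a / 2 = / (2 / a)); last by field; lra.
by apply: Rinv_lt_contravar => //; apply: Rmult_lt_0_compat => //;
  apply: Rdiv_lt_0_compat; lra.
Qed.

Lemma ln2_gt_half : 1 / 2 < ln 2.
Proof.
have e1 : exp (1 / 2) * exp (1 / 2) = exp 1 by rewrite -exp_plus; congr exp; field.
have := exp_le_3; have := exp_pos (1 / 2) => p e3.
rewrite -[X in X < _](ln_exp (1 / 2)); apply: ln_increasing => //; nra.
Qed.

(* The support bound needed is only T < (1/eps)^9, which holds as soon as
   T <= 16 eps^-4 + 1 and 1/eps > 2. *)
Lemma theta_support_lt (Om : finType) eps T : (2 <= #|Om|)%N -> 0 < eps < 1 / 2 ->
  INR T <= 16 / eps ^ 4 + 1 -> INR T < Rpower (2 * ln (INR #|Om|) / eps) (INR 9).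
Proof.
move=> Om2 [e0 e1] hT.
have ln_Om : 1 / 2 < ln (INR #|Om|).
  apply: Rlt_le_trans ln2_gt_half _.
  have h2 : 2 <= INR #|Om| by have := le_INR 2 #|Om| (elimT leP Om2); rewrite /=; lra.
  case: (Rle_lt_or_eq_dec _ _ h2) => [h|<-]; last lra.
  by apply: Rlt_le; apply: ln_increasing => //; lra.
set x := 2 * ln (INR #|Om|) / eps; set y := 1 / eps.
have y2 : 2 < y.
  by rewrite /y; apply: (Rmult_lt_reg_r eps) => //; rewrite /Rdiv Rmult_1_l Rinv_l; lra.
have y_x : y <= x.
  by rewrite /x /y /Rdiv; apply: Rmult_le_compat_r; [apply: Rinv_ge0; lra | lra].
rewrite Rpower_pow; last by rewrite /x; apply: Rdiv_lt_0_compat; lra.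
rewrite (_ : 16 / eps ^ 4 = 16 * y ^ 4) in hT; last by rewrite /y; field; lra.
have : y ^ 9 <= x ^ 9 by apply: pow_incr; lra.
have yy : 4 < y * y by nra.
have y4 : 16 < y ^ 4 by rewrite (_ : y ^ 4 = (y * y) * (y * y)); [nra | ring].
have y5 : 32 < (y * y) * (y * y) * y by nra.
have -> : y ^ 9 = y ^ 4 * ((y * y) * (y * y) * y) by ring.
nra.
Qed.

Theorem theorem2p4 :
  exists c : R, 0 < c /\
  forall (Om : finType), (2 <= #|Om|)%N ->
  forall eps : R, 0 < eps < 1 / 2 ->
  exists n0 : nat, (0 < n0)%N /\
  exists (N : nat) (theta : nat -> R),
    (forall t, 0 <= theta t) /\
    (forall t, (N <= t)%N -> theta t = 0) /\
    \big[Rplus/0]_(t < N) theta t = 1 /\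
    (forall t, theta t <> 0 ->
       (0 < t)%N /\ INR t < Rpower (2 * ln (INR #|Om|) / eps) c) /\
    forall n : nat, (n0 < n)%N ->
    forall mu : config Om n -> R, is_prob mu ->
      (forall t, theta t <> 0 -> (t <= n)%N) /\
      expect_i N theta mu < eps /\
      expect_ii N theta mu < eps.
Proof.
exists (INR 9); split; first by apply: lt_0_INR; apply/ltP.
move=> Om Om2 eps [e0 e1].
have k4 : 0 < 16 / eps ^ 4 by apply: Rdiv_lt_0_compat; [lra | apply: pow_lt].
have k2 : 0 < 4 / eps ^ 2 by apply: Rdiv_lt_0_compat; [lra | apply: pow_lt].
have [T [T_lo T_hi]] := exists_nat_between (Rlt_le _ _ k4).
have [n1 [n1_lo _]] := exists_nat_between (Rlt_le _ _ k2).
have T0 : (0 < T)%N by apply/ltP; apply: INR_lt; rewrite /=; lra.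
have support t : theta_unif T t <> 0 -> (0 < t <= T)%N.
  by rewrite /theta_unif; case: ifP.
exists (maxn T n1); split; first by rewrite leq_max T0.
exists T.+1, (theta_unif T); split; first exact: theta_unif_ge0.
split; first by move=> t Tt; rewrite /theta_unif [(t <= T)%N]leqNgt Tt andbF.
split; first exact: theta_unif_sum1.
split.
  move=> t /support /andP [t0 tT]; split => //.
  by apply: Rle_lt_trans (le_INR _ _ (elimT leP tT)) (theta_support_lt Om2 _ T_hi).
move=> n; rewrite gtn_max => /andP [Tn n1n] mu Pm.
have n_lo : 4 / eps ^ 2 < INR n by apply: Rlt_trans n1_lo (lt_INR _ _ (elimT ltP n1n)).
have := sqrt_inv_sqrt_lt e0 T_lo; have := sqrt_div_lt e0 n_lo.
have := expect_i_le T0 Tn Pm; have := expect_ii_le T0 Tn Pm.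
split; last lra.
by move=> t /support /andP [_ tT]; apply: leq_trans tT (ltnW Tn).
Qed.
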